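(* Let $S$ be a semiring and let $\mathcal{A}=(A,X,Y,\sigma^A,\delta^A,\omega^A)$ be a Mealy-type weighted automaton over $S$. Then there exists a sequential weighted automaton $\mathcal{B}=(B,X,Y,\sigma^B,\mu^B)$ over $S$ such that $[\![\mathcal{A}]\!]_s=[\![\mathcal{B}]\!]$ (as functions $(X\times Y)^*\to S$). Moreover, $\mathcal{B}$ can be chosen with $|B|\le |A|$.
   Context: A semiring $(S,+,\cdot,0,1)$ is a set with $(S,+,0)$ a commutative monoid, $(S,\cdot,1)$ a monoid (not necessarily commutative), $\cdot$ distributing over $+$ on both sides, and $0\cdot s=s\cdot 0=0$. $(X\times Y)^*$ is identified with the set of pairs $(u,v)\in X^*\times Y^*$ with $|u|=|v|$; its empty element is $(\varepsilon,\varepsilon)$. All automata have finite nonempty state set and finite nonempty alphabets $X,Y$. A sequential weighted automaton over $S$ is $\mathcal{B}=(B,X,Y,\sigma,\mu)$ with $\sigma:B\to S$ and $\mu:B\times X\times Y\times B\to S$. Its behavior $[\![\mathcal{B}]\!]:(X\times Y)^*\to S$ is $[\![\mathcal{B}]\!](\varepsilon,\varepsilon)=\sum_{b\in B}\sigma(b)$ and, for $u=x_1\cdots x_n$, $v=y_1\cdots y_n$ ($n\ge1$, $x_i\in X$, $y_i\in Y$), $[\![\mathcal{B}]\!](u,v)=\sum_{(b_0,\dots,b_n)\in B^{n+1}}\sigma(b_0)\cdot\mu(b_0,x_1,y_1,b_1)\cdot\mu(b_1,x_2,y_2,b_2)\cdots\mu(b_{n-1},x_n,y_n,b_n)$. A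 Mealy-type weighted automaton over $S$ is $\mathcal{A}=(A,X,Y,\sigma,\delta,\omega)$ with $\sigma:A\to S$, $\delta:A\times X\times A\to S$, $\omega:A\times X\times Y\to S$; write $\delta_x(a,b)=\delta(a,x,b)$ and $\omega_{x,y}(a)=\omega(a,x,y)$. Its sequential behavior $[\![\mathcal{A}]\!]_s$ is $[\![\mathcal{A}]\!]_s(\varepsilon,\varepsilon)=\sum_{a\in A}\sigma(a)$ and, for $u=x_1\cdots x_n$, $v=y_1\cdots y_n$ with $n\ge 1$, $[\![\mathcal{A}]\!]_s(u,v)=\sum_{(a_0,\dots,a_n)\in A^{n+1}}\sigma(a_0)\cdot\omega_{x_1,y_1}(a_0)\cdot\delta_{x_1}(a_0,a_1)\cdot\omega_{x_2,y_2}(a_1)\cdot\delta_{x_2}(a_1,a_2)\cdots\omega_{x_n,y_n}(a_{n-1})\cdot\delta_{x_n}(a_{n-1},a_n)$. *)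

From HB Require Import structures.
From mathcomp Require Import all_boot all_order all_algebra.
Set Implicit Arguments. Unset Strict Implicit. Unset Printing Implicit Defensive.
Import GRing.Theory.
Local Open Scope ring_scope.

(* A semiring (not necessarily commutative, 0 = 1 allowed) is a pzSemiRingType.
   (X x Y)^* is represented as seq (X * Y): the word w = [(x1,y1);...;(xn,yn)]
   is the pair (x1...xn, y1...yn). *)

Definition seq_behavior (S : pzSemiRingType) (X Y B : finType)
  (sigma : B -> S) (mu : B -> X -> Y -> B -> S) (w : seq (X * Y)) : S :=
  match w with
  | [::] => \sum_(b : B) sigma b
  | d :: _ =>
    let n := size w in
    \sum_(p : {ffun 'I_n.+1 -> B})
      (sigma (p ord0) *
       \prod_(i < n)
         mu (p (inord i)) ((nth d w i).1)
            ((nth d w i).2) (p (inord i.+1)))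
  end.

Definition mealy_seq_behavior (S : pzSemiRingType) (X Y A : finType)
  (sigma : A -> S) (delta : A -> X -> A -> S) (omega : A -> X -> Y -> S)
  (w : seq (X * Y)) : S :=
  match w with
  | [::] => \sum_(a : A) sigma a
  | d :: _ =>
    let n := size w in
    \sum_(p : {ffun 'I_n.+1 -> A})
      (sigma (p ord0) *
       \prod_(i < n)
         (omega (p (inord i)) ((nth d w i).1)
                ((nth d w i).2) *
          delta (p (inord i)) ((nth d w i).1) (p (inord i.+1))))
  end.

From mathcomp Require Import all_boot all_order all_algebra.
Local Open Scope ring_scope.

Definition mealy_transition {S : pzSemiRingType} {X Y A : finType}
  (delta : A -> X -> A -> S) (omega : A -> X -> Y -> S) :
  A -> X -> Y -> A -> S :=
  fun a x y b => omega a x y * delta a x b.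

Lemma mealy_seq_behaviorE {S : pzSemiRingType} {X Y A : finType}
  (sigma : A -> S) (delta : A -> X -> A -> S) (omega : A -> X -> Y -> S) :
  mealy_seq_behavior sigma delta omega =1
  seq_behavior sigma (mealy_transition delta omega).
Proof. by []. Qed.

Theorem theorem1 (S : pzSemiRingType) (A X Y : finType)
  (hA : (0 < #|A|)%N) (hX : (0 < #|X|)%N) (hY : (0 < #|Y|)%N)
  (sigmaA : A -> S) (deltaA : A -> X -> A -> S) (omegaA : A -> X -> Y -> S) :
  exists (B : finType) (sigmaB : B -> S) (muB : B -> X -> Y -> B -> S),
    [/\ (0 < #|B|)%N, (#|B| <= #|A|)%N &
      forall w : seq (X * Y),
        mealy_seq_behavior sigmaA deltaA omegaA w = seq_behavior sigmaB muB w].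
Proof.
exists A, sigmaA, (mealy_transition deltaA omegaA).
by split=> //; apply: mealy_seq_behaviorE.
Qed.
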